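(* For every $X\in\{\mathsf{T},\mathsf{S}\}^*$, the sequence $X\mathsf{T}$ is not minimal in $\{\mathsf{T},\mathsf{S}\}^*$; that is, there exists $Y\in\{\mathsf{T},\mathsf{S}\}^*$ with $Y\sqsubseteq X\mathsf{T}$ and $Y\not\equiv X\mathsf{T}$.
   Context: Fix attribute–taxonomy pairs $A_1{:}T_1,\dots,A_d{:}T_d$ with distinct attribute names, where each taxonomy $T_i=(V_i,\le_{V_i})$ is a poset (taxonomies may be chosen as needed). A t-tuple over a t-schema $S\subseteq\{A_1{:}T_1,\dots,A_d{:}T_d\}$ maps each $A_i$ in $S$ to a value of $V_i$; $\mathcal{D}$ is the set of all t-tuples over all such t-schemas. A preference relation is a binary relation $\succeq$ on $\mathcal{D}$. Preferences are given by a formula $F(x,y)=\bigvee_i P_i(x,y)$, a disjunction of statements; each statement $P_i$ is a disjunction of clauses, each clause a satisfiable conjunction of atoms of the forms $x[A_i]\le_{V_i} v$, $x[A_i]\not\le_{V_i} v$, $y[A_i]\le_{V_i} v$, $y[A_i]\not\le_{V_i} v$; the formula induces $t_1\succeq t_2\iff F(t_1,t_2)$. Operator $\mathsf{T}$ maps a formula to one inducing the transitive closure over $\mathcal{D}$ of the induced relation. Operator $\mathsf{S}$ (specificity-based refinement): repeat rounds; in a round, for each statement $P_i$ let $\mathrm{Impl}(P_i)$ be the set of statements $P_j$ such that $P_j(t_2,t_1)\Rightarrow P_i(t_1,t_2)$ for all $t_1,t_2\in\mathcal{D}$ but not conversely; simultaneously replace every $P_i$ with nonempty $\mathrm{Impl}(P_i)$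 by $P_i(x,y)\wedge\bigwedge_{P_j\in \mathrm{Impl}(P_i)}\neg P_j(y,x)$; stop when no $\mathrm{Impl}$ set is nonempty. After each operator, contradictory clauses and subsumed statements are removed. For $X\in\{\mathsf{T},\mathsf{S}\}^*$, $\succeq_X$ is the relation induced by applying the operators of $X$ in order to the initial formula. Containment $X\sqsubseteq Y$ means $\succeq_X\subseteq\succeq_Y$ for every initial preference formula; $X\equiv Y$ means both containments. A sequence $X$ is minimal in a set $\Sigma$ of sequences if $X\in\Sigma$ and there is no $Y\in\Sigma$ with $Y\not\equiv X$ and $Y\sqsubseteq X$. *)

From mathcomp Require Import all_boot.
From Stdlib Require Import List.
Import ListNotations.

Set Implicit Arguments.
Unset Strict Implicit.
Unset Printing Implicit Defensive.

(* Attribute-taxonomy pairs A_1:T_1, ..., A_d:T_d, each T_i a poset.   *)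
Record setup := Setup {
  nattr : nat;
  tval : 'I_nattr -> Type;
  tle : forall i, tval i -> tval i -> Prop;
  tle_refl : forall i (a : tval i), tle a a;
  tle_antisym : forall i (a b : tval i), tle a b -> tle b a -> a = b;
  tle_trans : forall i (a b c : tval i), tle a b -> tle b c -> tle a c
}.
Arguments tval : clear implicits.
Arguments tle {s i}.

(* A t-tuple over some t-schema S : attribute i is in S iff t i = Some _.
   The type [tuple s] is the set D of all t-tuples over all t-schemas. *)
Definition tuple (s : setup) := forall i : 'I_(nattr s), option (tval s i).

Definition rel (s : setup) := tuple s -> tuple s -> Prop.

Inductive var := vx | vy.

Inductive atom (s : setup) :=
| ALe  : var -> forall i : 'I_(nattr s), tval s i -> atom s
| ANle : var -> forall i : 'I_(nattr s), tval s i -> atom s.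

Definition clause (s : setup) := list (atom s).
Definition statement (s : setup) := list (clause s).
Definition formula (s : setup) := list (statement s).

Definition pick (s : setup) (v : var) (x y : tuple s) := match v with vx => x | vy => y end.

Definition atom_sem (s : setup) (a : atom s) (x y : tuple s) : Prop :=
  match a with
  | ALe w i v => match pick w x y i with Some u => tle u v | None => False end
  | ANle w i v => match pick w x y i with Some u => ~ tle u v | None => False end
  end.

Definition clause_sem (s : setup) (c : clause s) : rel s :=
  fun x y => forall a, In a c -> atom_sem a x y.

Definition statement_sem (s : setup) (p : statement s) : rel s :=
  fun x y => exists c, In c p /\ clause_sem c x y.

Definition clause_satisfiable (s : setup) (c : clause s) : Prop :=
  exists x y, clause_sem c x y.

Definition wf_formula (s : setup) (f : formula s) : Prop :=
  forall p c, In p f -> In c p -> clause_satisfiable c.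

(* A formula is represented by the set of (the relations denoted by) its
   statements; it induces the union of these relations. *)
Definition fset (s : setup) := rel s -> Prop.

Definition formula_set (s : setup) (f : formula s) : fset s :=
  fun P => exists p, In p f /\ P = statement_sem p.

Definition induced (s : setup) (F : fset s) : rel s :=
  fun x y => exists P, F P /\ P x y.

Definition subrel (s : setup) (P Q : rel s) : Prop := forall x y, P x y -> Q x y.

Definition nonempty_rel (s : setup) (P : rel s) : Prop := exists x y, P x y.

(* removal of contradictory clauses (statements that became empty) and of
   statements strictly subsumed by another statement *)
Definition normalize (s : setup) (F : fset s) : fset s :=
  fun P => F P /\ nonempty_rel P /\
           ~ (exists Q, F Q /\ subrel P Q /\ ~ subrel Q P).

Fixpoint compose_list (s : setup) (l : list (rel s)) : rel s :=
  match l with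
  | [] => fun _ _ => False
  | [P] => P
  | P :: l' => fun x y => exists z, P x z /\ compose_list l' z y
  end.

(* the statements of T(F) are all compositions P_{i1} o ... o P_{ik}
   (k >= 1) of statements of F; they induce the transitive closure *)
Definition opT (s : setup) (F : fset s) : fset s :=
  normalize (fun P => exists l, l <> [] /\ Forall F l /\ P = compose_list l).

Definition Impl (s : setup) (F : fset s) (Pi Pj : rel s) : Prop :=
  F Pj /\ (forall t1 t2, Pj t2 t1 -> Pi t1 t2) /\
  ~ (forall t1 t2, Pi t1 t2 -> Pj t2 t1).

Definition S_round (s : setup) (F : fset s) : fset s :=
  fun Q => nonempty_rel Q /\
    exists P, F P /\ Q = (fun x y => P x y /\ forall Pj, Impl F P Pj -> ~ Pj y x).

Definition S_stable (s : setup) (F : fset s) : Prop :=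
  forall P Pj, F P -> ~ Impl F P Pj.

Definition opS (s : setup) (F G : fset s) : Prop :=
  exists n, S_stable (Nat.iter n (@S_round s) F) /\
    (forall m, m < n -> ~ S_stable (Nat.iter m (@S_round s) F)) /\
    G = normalize (Nat.iter n (@S_round s) F).

Inductive op := OpT | OpS.

Inductive Apply (s : setup) : list op -> fset s -> fset s -> Prop :=
| Apply_nil F : Apply [] F F
| Apply_T X F G : Apply X (opT F) G -> Apply (OpT :: X) F G
| Apply_S X F F' G : opS F F' -> Apply X F' G -> Apply (OpS :: X) F G.

Definition contained (X Y : list op) : Prop :=
  forall (s : setup) (f : formula s), wf_formula f ->
  forall GX GY, Apply X (formula_set f) GX -> Apply Y (formula_set f) GY ->
  forall x y, induced GX x y -> induced GY x y.

Definition op_equiv (X Y : list op) : Prop := contained X Y /\ contained Y X.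

Definition minimal_in (Sigma : list op -> Prop) (X : list op) : Prop :=
  Sigma X /\ ~ (exists Y, Sigma Y /\ ~ op_equiv Y X /\ contained Y X).

From Pilot Require Import Defs.
From Stdlib Require Import List FunctionalExtensionality PropExtensionality.
Import ListNotations.
From HB Require Import structures.
From mathcomp Require Import all_boot.

(* Appending [S] can only remove pairs from the induced relation, so [X T S] is contained in
   [X T].  To see that the containment is strict for every [X], one attribute with three
   incomparable values suffices: statements then denote finite relations on these values, and
   both operators become computable.  For a suitable S-stable formula [pref], [T] maps [pref] and
   [pref_T] to [pref_T] and [S] maps both to [pref]; so whatever [X] is, [X T] induces [pref_T]
   and [X T S] induces [pref], and only the former relates [v1] to [v0]. *)

Set Implicit Arguments.
Unset Strict Implicit.
Unset Printing Implicit Defensive.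

Section Operators.

Variable s : setup.
Implicit Types (F G : fset s) (X : list op).

Lemma opS_functional F G1 G2 : opS F G1 -> opS F G2 -> G1 = G2.
Proof.
move=> [n1 [stable1 [min1 ->]]] [n2 [stable2 [min2 ->]]].
by case: (ltngtP n1 n2) => [/min2 | /min1 | ->].
Qed.

Lemma Apply_functional X F G1 G2 : Apply X F G1 -> Apply X F G2 -> G1 = G2.
Proof.
move=> A1; elim: A1 G2 => {X F G1} [F | X F G1 _ IH | X F F' G1 SF _ IH] G2 A2;
  inversion A2 as [|? ? ? A2'|? ? F'' ? SF' A2']; subst => //; first exact: IH.
by apply: IH; rewrite (opS_functional SF SF').
Qed.

Lemma Apply_cat X Y F H G : Apply X F H -> Apply Y H G -> Apply (X ++ Y) F G.
Proof.
elim=> {X F H} [F | X F H _ IH | X F F' H SF _ IH] AY /=.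
- exact: AY.
- exact/Apply_T/IH.
- exact: Apply_S SF (IH AY).
Qed.

Lemma Apply_cat_split X Y F G :
  Apply (X ++ Y) F G -> exists2 H, Apply X F H & Apply Y H G.
Proof.
elim: X F => [|o X IH] F /= A; first by exists F; [constructor | ].
inversion A as [|? ? ? AX|? ? F' ? SF AX]; subst;
  have [H AXH AYH] := IH _ AX; exists H => //.
- exact: Apply_T.
- exact: Apply_S SF AXH.
Qed.

Lemma induced_opS F G x y : opS F G -> induced G x y -> induced F x y.
Proof.
move=> [n [_ [_ ->]]] [P [[FP _] Pxy]].
elim: n P FP Pxy => [|n IH] P FP Pxy; first by exists P.
have [_ [P' [FP' eP]]] := FP.
by apply: (IH P' FP'); rewrite eP in Pxy; case: Pxy.
Qed.

Lemma compose_list_cons (P : Defs.rel s) l : l <> [] ->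
  compose_list (P :: l) = fun x y => exists z, P x z /\ compose_list l z y.
Proof. by case: l. Qed.

End Operators.

Lemma contained_catS X : contained (X ++ [OpS]) X.
Proof.
move=> s f _ GX GY AXS AX x y GXxy.
have [H AXH AS] := Apply_cat_split AXS.
rewrite (Apply_functional AXH AX) in AS.
inversion AS as [| |? ? F' ? SF A0]; subst.
by inversion A0; subst; exact: induced_opS SF GXxy.
Qed.

Inductive V3 := v0 | v1 | v2.

Definition V3_eqb (a b : V3) : bool :=
  match a, b with v0, v0 | v1, v1 | v2, v2 => true | _, _ => false end.

Lemma V3_eqP : Equality.axiom V3_eqb.
Proof. by do 2 case; constructor. Qed.

HB.instance Definition _ := hasDecEq.Build V3 V3_eqP.

Definition V3_le (i : 'I_1) (a b : V3) : Prop := a = b.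

Lemma V3_le_refl i a : V3_le i a a. Proof. by []. Qed.
Lemma V3_le_antisym i a b : V3_le i a b -> V3_le i b a -> a = b. Proof. by []. Qed.
Lemma V3_le_trans i a b c : V3_le i a b -> V3_le i b c -> V3_le i a c.
Proof. exact: etrans. Qed.

Definition flat3 : setup := Setup V3_le_refl V3_le_antisym V3_le_trans.

Definition tup (a : V3) : Defs.tuple flat3 := fun _ => Some a.

Definition values : seq V3 := [:: v0; v1; v2].

Definition graph := seq (V3 * V3).

Definition rel_of (g : graph) : Defs.rel flat3 := fun x y =>
  if (x ord0, y ord0) is (Some a, Some b) then (a, b) \in g else False.

Lemma rel_of_tup g a b : rel_of g (tup a) (tup b) = ((a, b) \in g).
Proof. by []. Qed.

Lemma rel_of_Some g x y a b :
  x ord0 = Some a -> y ord0 = Some b -> rel_of g x y = ((a, b) \in g).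
Proof. by rewrite /rel_of => -> ->. Qed.

Definition subgraph (g1 g2 : graph) : bool := all (mem g2) g1.

Lemma subrel_rel_of (g1 g2 : graph) : Defs.subrel (rel_of g1) (rel_of g2) <-> subgraph g1 g2.
Proof.
split=> [sub12 | /allP sub12 x y]; first by apply/allP => -[a b]; exact: (sub12 (tup a) (tup b)).
by rewrite /rel_of; case: (x ord0) => [a|] //; case: (y ord0) => [b|] //; apply: sub12.
Qed.

Lemma nonempty_rel_ofP (g : graph) : nonempty_rel (rel_of g) <-> g != [::].
Proof.
split=> [[x [y]] | ]; last first.
  by case: g => // -[a b] g _; exists (tup a), (tup b); rewrite rel_of_tup inE eqxx.
by rewrite /rel_of; case: (x ord0) => [a|] //; case: (y ord0) => [b|] //; case: g.
Qed.

Definition flip (g : graph) : graph := [seq (p.2, p.1) | p <- g].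

Lemma mem_flip (g : graph) a b : ((a, b) \in flip g) = ((b, a) \in g).
Proof.
apply/mapP/idP => [[[b' a'] g_ba [-> ->]] // | g_ba]; by exists (b, a).
Qed.

Lemma rel_of_flip (g : graph) x y : rel_of (flip g) x y = rel_of g y x.
Proof.
by rewrite /rel_of; case: (x ord0) => [a|] //; case: (y ord0) => [b|] //; rewrite mem_flip.
Qed.

Lemma converse_sub_rel_of g1 g2 :
  (forall x y, rel_of g1 x y -> rel_of g2 y x) <-> subgraph g1 (flip g2).
Proof.
by rewrite -subrel_rel_of; split=> sub12 x y; move/sub12; rewrite rel_of_flip.
Qed.

Definition pairs : graph := [seq (a, b) | a <- values, b <- values].

(* Graphs built by [graph_of] list their pairs in the order of [pairs], so equal relations get
   equal graphs and the computations below can compare statements syntactically. *)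
Definition graph_of (r : V3 -> V3 -> bool) : graph := [seq p <- pairs | r p.1 p.2].

Lemma mem_graph_of r a b : ((a, b) \in graph_of r) = r a b.
Proof. by rewrite mem_filter andbC; case: a; case: b. Qed.

Definition comp (g1 g2 : graph) : graph :=
  graph_of (fun a c => has (fun b => ((a, b) \in g1) && ((b, c) \in g2)) values).

Lemma rel_of_comp g1 g2 :
  (fun x y => exists z, rel_of g1 x z /\ rel_of g2 z y) = rel_of (comp g1 g2).
Proof.
apply: functional_extensionality => x; apply: functional_extensionality => y.
apply: propositional_extensionality; rewrite /rel_of.
case: (x ord0) => [a|]; case: (y ord0) => [c|]; rewrite ?mem_graph_of; split=> //.
- case=> z; case: (z ord0) => [b|] [ab bc] //.
  by apply/hasP; exists b; [case: b {ab bc} | apply/andP].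
- by case/hasP=> b _ /andP[ab bc]; exists (tup b).
all: by case=> z; case: (z ord0) => [?|] [].
Qed.

Definition fset_of (L : seq graph) : fset flat3 := fun P => exists2 g, g \in L & P = rel_of g.

Definition normalize_graphs (L : seq graph) : seq graph :=
  [seq g <- L | (g != [::]) && ~~ has (fun g' => subgraph g g' && ~~ subgraph g' g) L].

Lemma normalize_fset_of L : normalize (fset_of L) = fset_of (normalize_graphs L).
Proof.
apply: functional_extensionality => P; apply: propositional_extensionality.
split=> [[[g gL ->] [/nonempty_rel_ofP g0 maxg]] | [g]].
  exists g => //; rewrite mem_filter g0 gL andbT /=.
  apply/hasP=> -[g' g'L /andP[sub12 /negP sub21]]; apply: maxg.
  by exists (rel_of g'); split; [exists g' | rewrite !subrel_rel_of].
rewrite mem_filter => /andP[/andP[g0 /hasP maxg] gL] ->.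
split; first by exists g.
split=> [|[_ [[g' g'L ->]]]]; first exact/nonempty_rel_ofP.
rewrite !subrel_rel_of => -[sub12 sub21]; apply: maxg; exists g' => //.
by rewrite sub12; apply/negP.
Qed.

Definition compose_step (G C : seq graph) : seq graph :=
  undup (C ++ [seq comp g c | g <- G, c <- C]).

Definition composites (k : nat) (G : seq graph) : seq graph :=
  Nat.iter k (compose_step G) G.

Lemma composites_sub k G : {subset G <= composites k G}.
Proof.
elim: k => [|k IH] //= g /IH gC.
by rewrite /compose_step mem_undup mem_cat gC.
Qed.

Lemma composites_realized k G g : g \in composites k G ->
  exists l, [/\ l <> [], Forall (fset_of G) l & rel_of g = compose_list l].
Proof.
elim: k g => [|k IH] g /=.
  by exists [rel_of g]; split=> //; constructor=> //; exists g.
rewrite /compose_step mem_undup mem_cat => /orP[/IH // | /allpairsP[[g' c] [/= g'G cC ->]]].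
have [l [l0 Gl ec]] := IH _ cC.
exists (rel_of g' :: l); split=> //; first by constructor=> //; exists g'.
by rewrite compose_list_cons // -ec rel_of_comp.
Qed.

Definition comp_closed (G C : seq graph) : bool :=
  all (fun g => all (fun c => comp g c \in C) C) G.

Lemma compose_list_closed G C l : comp_closed G C -> {subset G <= C} ->
  l <> [] -> Forall (fset_of G) l -> exists2 g, g \in C & compose_list l = rel_of g.
Proof.
move=> /allP closedC GC; elim: l => [|P l IH] // _ /Forall_cons_iff [[g gG ->] Gl].
case: l IH Gl => [|Q l] IH Gl; first by exists g; [exact: GC |].
have [c cC ec] := IH ltac:(discriminate) Gl.
exists (comp g c); first exact: (allP (closedC g gG)).
by rewrite compose_list_cons // ec rel_of_comp.
Qed.

Lemma opT_fset_of k G : comp_closed G (composites k G) ->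
  opT (fset_of G) = fset_of (normalize_graphs (composites k G)).
Proof.
move=> closedC; rewrite /opT -normalize_fset_of; congr normalize.
apply: functional_extensionality => P; apply: propositional_extensionality; split.
  move=> [l [l0 [Gl ->]]].
  exact: compose_list_closed closedC (@composites_sub k G) l0 Gl.
by move=> [g /composites_realized [l [l0 Gl eg]] ->]; exists l.
Qed.

Definition impl (gi gj : graph) : bool := subgraph gj (flip gi) && ~~ subgraph gi (flip gj).

Lemma ImplP L gi Pj : Impl (fset_of L) (rel_of gi) Pj <->
  exists2 gj, gj \in L & Pj = rel_of gj /\ impl gi gj.
Proof.
split.
  move=> [[gj gjL ->] [ji ij]]; exists gj => //; split=> //.
  apply/andP; split; first by apply/converse_sub_rel_of => x y /ji.
  by apply/negP => /converse_sub_rel_of ij'; apply: ij => x y /ij'.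
move=> [gj gjL [-> /andP[/converse_sub_rel_of ji /negP ij]]].
split; first by exists gj.
split=> [x y /ji // | ij']; apply: ij; exact/converse_sub_rel_of.
Qed.

Definition refine (L : seq graph) (gi : graph) : graph :=
  [seq p <- gi | all (fun gj => impl gi gj ==> ((p.2, p.1) \notin gj)) L].

Lemma rel_of_refine L gi :
  (fun x y => rel_of gi x y /\ forall Pj, Impl (fset_of L) (rel_of gi) Pj -> ~ Pj y x)
  = rel_of (refine L gi).
Proof.
apply: functional_extensionality => x; apply: functional_extensionality => y.
apply: propositional_extensionality.
case ex: (x ord0) => [a|]; last by rewrite /rel_of ex; split=> [[]|].
case ey: (y ord0) => [b|]; last by rewrite /rel_of ex ey; split=> [[]|].
rewrite !(rel_of_Some _ ex ey) mem_filter; split.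
  move=> [gab noPj]; rewrite gab andbT; apply/allP => gj gjL; apply/implyP => ij.
  apply/negP => gba; apply: (noPj (rel_of gj)); last by rewrite (rel_of_Some _ ey ex).
  by apply/ImplP; exists gj.
move=> /andP[/allP allL gab]; split=> // Pj /ImplP[gj gjL [-> ij]].
by rewrite (rel_of_Some _ ey ex); apply/negP; exact: (implyP (allL gj gjL) ij).
Qed.

Definition S_round_graphs (L : seq graph) : seq graph :=
  [seq g <- map (refine L) L | g != [::]].

Lemma S_round_fset_of L : S_round (fset_of L) = fset_of (S_round_graphs L).
Proof.
apply: functional_extensionality => Q; apply: propositional_extensionality; split.
  move=> [Q0 [_ [[gi giL ->] eQ]]]; subst Q; rewrite rel_of_refine in Q0 *.
  exists (refine L gi) => //.
  by rewrite mem_filter map_f // andbT; apply/nonempty_rel_ofP.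
move=> [g]; rewrite mem_filter => /andP[g0 /mapP[gi giL eg]] ->; subst g.
split; first exact/nonempty_rel_ofP.
by exists (rel_of gi); split; [exists gi | rewrite rel_of_refine].
Qed.

Definition stable_graphs (L : seq graph) : bool := ~~ has (fun gi => has (impl gi) L) L.

Lemma S_stable_fset_of L : S_stable (fset_of L) <-> stable_graphs L.
Proof.
split=> [stableL | /hasPn stableL P Pj [gi giL ->] /ImplP[gj gjL [_ ij]]].
  apply/hasPn => gi giL; apply/hasPn => gj gjL; apply/negP => ij.
  by apply: (stableL (rel_of gi) (rel_of gj)); [exists gi | apply/ImplP; exists gj].
by move/hasPn: (stableL gi giL) => /(_ gj gjL); rewrite ij.
Qed.

Lemma iter_S_round_fset_of n L :
  Nat.iter n (@S_round flat3) (fset_of L) = fset_of (Nat.iter n S_round_graphs L).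
Proof. by elim: n => //= n ->; rewrite S_round_fset_of. Qed.

Lemma opS_fset_of n L :
  all (fun m => ~~ stable_graphs (Nat.iter m S_round_graphs L)) (iota 0 n) ->
  stable_graphs (Nat.iter n S_round_graphs L) ->
  opS (fset_of L) (fset_of (normalize_graphs (Nat.iter n S_round_graphs L))).
Proof.
move=> /allP unstable stable; exists n; rewrite iter_S_round_fset_of normalize_fset_of.
split; first exact/S_stable_fset_of.
split=> // m mn; rewrite iter_S_round_fset_of S_stable_fset_of.
by apply/negP; apply: unstable; rewrite mem_iota.
Qed.

Lemma mem_In (T : eqType) (x : T) (s : seq T) : In x s <-> x \in s.
Proof.
elim: s => [|y s IH] //=; rewrite inE.
split=> [[-> | /IH ->] | /orP[/eqP -> | /IH]]; rewrite ?eqxx ?orbT //; by [left | right].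
Qed.

Definition point_clause (p : V3 * V3) : clause flat3 :=
  [@ALe flat3 vx ord0 p.1; @ALe flat3 vy ord0 p.2].

Lemma point_clause_sem a b x y :
  clause_sem (point_clause (a, b)) x y <-> x ord0 = Some a /\ y ord0 = Some b.
Proof.
split=> [sem | [xa yb] _ [<- | [<- | []]]]; rewrite /atom_sem /= ?xa ?yb //.
have := sem _ (or_intror (or_introl erefl)); have := sem _ (or_introl erefl).
by rewrite /atom_sem /=; case: (x ord0) => [u|] // ->; case: (y ord0) => [v|] // ->.
Qed.

Definition statement_of (g : graph) : statement flat3 := List.map point_clause g.

Lemma statement_of_sem g : statement_sem (statement_of g) = rel_of g.
Proof.
apply: functional_extensionality => x; apply: functional_extensionality => y.
apply: propositional_extensionality; split.
  move=> [_ [/in_map_iff [[a b] [<- /mem_In gab]] /point_clause_sem [xa yb]]].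
  by rewrite (rel_of_Some _ xa yb).
case xa: (x ord0) => [a|]; last by rewrite /rel_of xa.
case yb: (y ord0) => [b|]; last by rewrite /rel_of xa yb.
rewrite (rel_of_Some _ xa yb) => /mem_In gab.
by exists (point_clause (a, b)); split; [exact: in_map | exact/point_clause_sem].
Qed.

Definition formula_of (L : seq graph) : formula flat3 := List.map statement_of L.

Lemma formula_set_of L : formula_set (formula_of L) = fset_of L.
Proof.
apply: functional_extensionality => P; apply: propositional_extensionality; split.
  move=> [_ [/in_map_iff [g [<- /mem_In gL]] ->]].
  by exists g; rewrite ?statement_of_sem.
move=> [g /mem_In gL ->]; exists (statement_of g).
by split; [exact: in_map | rewrite statement_of_sem].
Qed.

Lemma formula_of_wf L : wf_formula (formula_of L).
Proof.
move=> _ c /in_map_iff [g [<- _]] /in_map_iff [[a b] [<- _]].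
by exists (tup a), (tup b); apply/point_clause_sem.
Qed.

Lemma induced_fset_of L a b :
  induced (fset_of L) (tup a) (tup b) <-> has (fun g => (a, b) \in g) L.
Proof.
split=> [[_ [[g gL ->]]] gab | /hasP [g gL gab]]; first by apply/hasP; exists g.
by exists (rel_of g); split; first exists g.
Qed.

(* [pref_T] is [pref] with the pair [(v1, v0)] = [(v1, v2)] o [(v2, v0)] added to its second
   statement; [(v0, v1)] is strictly more specific than that statement, so the refinement by [S]
   removes the new pair again. *)
Definition pref : seq graph :=
  [:: [:: (v1, v1); (v2, v1)]; [:: (v1, v2); (v2, v0); (v2, v2)]; [:: (v0, v1)];
      [:: (v0, v0); (v0, v2)]].

Definition pref_T : seq graph :=
  [:: [:: (v1, v1); (v2, v1)]; [:: (v1, v0); (v1, v2); (v2, v0); (v2, v2)]; [:: (v0, v1)];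
      [:: (v0, v0); (v0, v2)]].

Lemma opT_pref F : F = fset_of pref \/ F = fset_of pref_T -> opT F = fset_of pref_T.
Proof. by case=> ->; rewrite (@opT_fset_of 2) //; vm_compute. Qed.

Lemma opS_pref : opS (fset_of pref) (fset_of pref).
Proof.
have -> : fset_of pref = fset_of (normalize_graphs (Nat.iter 0 S_round_graphs pref)).
  by congr fset_of; vm_compute.
by apply: opS_fset_of; vm_compute.
Qed.

Lemma opS_pref_T : opS (fset_of pref_T) (fset_of pref).
Proof.
have -> : fset_of pref = fset_of (normalize_graphs (Nat.iter 1 S_round_graphs pref_T)).
  by congr fset_of; vm_compute.
by apply: opS_fset_of; vm_compute.
Qed.

Lemma Apply_pref X F : F = fset_of pref \/ F = fset_of pref_T ->
  exists2 G, Apply X F G & G = fset_of pref \/ G = fset_of pref_T.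
Proof.
elim: X F => [|[] X IH] F Fpref; first by exists F; first constructor.
  have [G AG Gpref] := IH (opT F) (or_intror (opT_pref Fpref)).
  by exists G => //; apply: Apply_T.
have SF : opS F (fset_of pref) by case: Fpref => ->; [exact: opS_pref | exact: opS_pref_T].
have [G AG Gpref] := IH _ (or_introl erefl).
by exists G => //; apply: Apply_S SF AG.
Qed.

Theorem mainTheorem7 :
  forall X : list op,
    exists Y : list op, contained Y (X ++ [OpT]) /\ ~ op_equiv Y (X ++ [OpT]).
Proof.
move=> X; exists ((X ++ [OpT]) ++ [OpS]); split; first exact: contained_catS.
have [G AX Gpref] := Apply_pref X (or_introl erefl).
have AXT : Apply (X ++ [OpT]) (fset_of pref) (fset_of pref_T).
  by apply: Apply_cat AX _; apply: Apply_T; rewrite opT_pref //; constructor.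
have AXTS : Apply ((X ++ [OpT]) ++ [OpS]) (fset_of pref) (fset_of pref).
  by apply: Apply_cat AXT _; apply: Apply_S opS_pref_T (Apply_nil _).
move=> [_ /(_ flat3 (formula_of pref) (@formula_of_wf pref))]; rewrite formula_set_of.
move=> /(_ _ _ AXT AXTS (tup v1) (tup v0)); rewrite !induced_fset_of.
by move/(_ isT).
Qed.
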